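(* For all positive integers $i,j$ and nonnegative integers $k$ such that $(i-k-2)(j-k-2)\geq (k+1)^2$, we have $R_k^{\mathcal{SP}}(i,j)=i+j-1$, where $\mathcal{SP}$ is the class of split graphs.
   Context: All graphs are finite and simple. For a graph $G$ and a nonnegative integer $k$, a $k$-sparse $j$-set is a set of $j$ vertices of $G$ inducing a subgraph of maximum degree at most $k$; a $k$-dense $i$-set is a set of $i$ vertices of $G$ that is $k$-sparse in the complement of $G$. For a graph class $\mathcal{G}$, $R_k^{\mathcal{G}}(i,j)$ is the smallest natural number $n$ such that every graph on $n$ vertices in $\mathcal{G}$ has either a $k$-dense $i$-set or a $k$-sparse $j$-set. A split graph is a graph whose vertex set can be partitioned into a clique and an independent set. *)

From mathcomp Require Import all_boot all_order all_algebra.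
Set Implicit Arguments. Unset Strict Implicit. Unset Printing Implicit Defensive.

Definition simple_graph (T : finType) (e : rel T) : Prop :=
  irreflexive e /\ symmetric e.

Definition compl_graph (T : finType) (e : rel T) : rel T :=
  fun x y => (x != y) && ~~ e x y.

Definition split_graph (T : finType) (e : rel T) : Prop :=
  exists K : {set T},
    (forall x y, x \in K -> y \in K -> x != y -> e x y) /\
    (forall x y, x \in ~: K -> y \in ~: K -> ~~ e x y).

Definition k_sparse_set (T : finType) (e : rel T) (k : nat) (S : {set T}) : Prop :=
  forall x, x \in S -> #|[set y in S | e x y]| <= k.

Definition k_dense_set (T : finType) (e : rel T) (k : nat) (S : {set T}) : Prop :=
  k_sparse_set (compl_graph e) k S.

Definition ramsey_SP_prop (k i j n : nat) : Prop :=
  forall e : rel 'I_n, simple_graph e -> split_graph e ->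
    (exists S : {set 'I_n}, #|S| = i /\ k_dense_set e k S) \/
    (exists S : {set 'I_n}, #|S| = j /\ k_sparse_set e k S).

Definition is_ramsey_SP (k i j r : nat) : Prop :=
  ramsey_SP_prop k i j r /\ forall n, ramsey_SP_prop k i j n -> r <= n.

(* Upper bound: the clique and the independent set of a split graph on
   n >= i + j - 1 vertices cannot both be small, and a clique is k-dense while
   an independent set is k-sparse.

   Lower bound: on n <= i + j - 2 vertices take a clique of i - 1 vertices and
   an independent set of at most j - 1 vertices placed at the positions of a
   cycle of length j - 1; clique vertex b sees the window of k + 1 cyclically
   consecutive positions starting at b (k + 1).  The windows are laid end to
   end, so each position lies in at most ceil((i - 1)(k + 1) / (j - 1)) <=
   i - k - 2 windows, by (k + 1)^2 <= (i - k - 2)(j - k - 2).  An i-set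
   contains an independent vertex, which then misses at least k + 1 others of
   the set; a j-set contains a clique vertex, which misses at most j - k - 2
   positions and so sees at least k + 1 others. *)
From mathcomp Require Import all_boot all_order all_algebra.
From mathcomp Require Import zify.
Import Order.TTheory GRing.Theory Num.Theory.

Set Implicit Arguments.
Unset Strict Implicit.
Unset Printing Implicit Defensive.

Lemma subset_of_card (T : finType) (A : {set T}) (m : nat) :
  m <= #|A| -> exists2 S : {set T}, S \subset A & #|S| = m.
Proof.
case/card_geqP=> s [uniq_s size_s sub_sA]; exists [set x in s].
  by apply/subsetP=> x; rewrite inE => /sub_sA.
by rewrite cardsE (card_uniqP uniq_s).
Qed.

Lemma card_le_size_inj (T : finType) (U : eqType) (A : {pred T})
    (f : T -> U) (s : seq U) :
  {in A &, injective f} -> (forall x, x \in A -> f x \in s) -> #|A| <= size s.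
Proof.
move=> inj_f f_in_s; rewrite cardE -(size_map f); apply: uniq_leq_size.
  rewrite map_inj_in_uniq ?enum_uniq // => x y; rewrite !mem_enum.
  exact: inj_f.
by move=> y /mapP [x]; rewrite mem_enum => /f_in_s + ->.
Qed.

Section SparseSets.
Variable T : finType.

Lemma clique_dense (e : rel T) (k : nat) (S : {set T}) :
  (forall x y, x \in S -> y \in S -> x != y -> e x y) -> k_dense_set e k S.
Proof.
move=> clique_S x xS; apply: leq_trans (leq0n k); rewrite leqn0 cards_eq0.
apply/eqP/setP=> y; rewrite !inE /compl_graph.
case: (boolP (y \in S)) => //= yS.
by case: eqVneq => //= /(clique_S x y xS yS) ->.
Qed.

Lemma stable_sparse (e : rel T) (k : nat) (S : {set T}) :
  (forall x y, x \in S -> y \in S -> ~~ e x y) -> k_sparse_set e k S.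
Proof.
move=> stable_S x xS; apply: leq_trans (leq0n k); rewrite leqn0 cards_eq0.
apply/eqP/setP=> y; rewrite !inE.
by case: (boolP (y \in S)) => //= yS; apply/negbTE/stable_S.
Qed.

(* Used with [(r, s) = (e, compl_graph e)] for dense sets and with
   [(r, s) = (compl_graph e, e)] for sparse sets. *)
Lemma no_sparse_set_of_small_codegree (r s : rel T) (K : {set T}) (i k : nat) :
  (forall x y, x != y -> r x y || s x y) -> #|K| < i ->
  (forall x, x \notin K -> #|[set y | r x y]| + k.+1 < i) ->
  forall S : {set T}, #|S| = i -> ~ k_sparse_set s k S.
Proof.
move=> cover ltKi small_r S cardS sparse_S.
have [x /setDP [xS xNK]] : exists x, x \in S :\: K.
  apply/set0Pn; rewrite -card_gt0 (cardsD S K) subn_gt0 cardS.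
  exact: leq_ltn_trans (subset_leq_card (subsetIr S K)) ltKi.
have cover_S : S \subset x |: [set y | r x y] :|: [set y in S | s x y].
  apply/subsetP=> y yS; rewrite !inE yS andTb.
  by case: eqVneq => //= neq_yx; apply: cover; rewrite eq_sym.
have := leq_trans (subset_leq_card cover_S) (leq_card_setU _ _).
rewrite cardsU1 cardS; have := sparse_S x xS; have := small_r x xNK.
case: (x \in _) => /=; lia.
Qed.

End SparseSets.

Lemma split_ramsey_upper (k i j n : nat) :
  i + j - 1 <= n -> ramsey_SP_prop k i j n.
Proof.
move=> le_n e _ [K [clique_K stable_K]].
have cardK : #|K| + #|~: K| = n by rewrite cardsC card_ord.
case: (leqP i #|K|) => [leiK | ltKi].
  left; have [S subSK cardS] := subset_of_card leiK; exists S; split=> //.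
  apply: clique_dense => x y /(subsetP subSK) xK /(subsetP subSK).
  exact: clique_K.
have lejK : j <= #|~: K| by lia.
right; have [S subSK cardS] := subset_of_card lejK; exists S; split=> //.
apply: stable_sparse => x y /(subsetP subSK) xK /(subsetP subSK).
exact: stable_K.
Qed.

Lemma ramsey_SP_prop0 (k i j : nat) :
  0 < i -> 0 < j -> ~ ramsey_SP_prop k i j 0.
Proof.
move=> i_gt0 j_gt0 P0.
have split0 : split_graph [rel _ _ : 'I_0 | false].
  by exists set0; split=> x; rewrite inE.
have [] := P0 _ (conj (fun _ => erefl) (fun _ _ => erefl)) split0.
  by case=> S [cardS _]; move: (max_card S); rewrite cardS card_ord; lia.
by case=> S [cardS _]; move: (max_card S); rewrite cardS card_ord; lia.
Qed.

Section CyclicWindows.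
Variables w m : nat.

Definition window (b : nat) : seq nat := [seq (b * w + t) %% m | t <- iota 0 w].

Lemma window_uniq (b : nat) : w <= m -> uniq (window b).
Proof.
move=> le_wm; rewrite map_inj_in_uniq ?iota_uniq // => x y.
rewrite !mem_iota !add0n => ltxw ltyw /eqP.
by rewrite eqn_modDl !modn_small; [move/eqP | lia | lia].
Qed.

Lemma count_notin_window (b : nat) :
  w <= m -> count (predC (mem (window b))) (iota 0 m) <= m - w.
Proof.
move=> le_wm; have : w <= count (mem (window b)) (iota 0 m).
  rewrite -size_filter -(size_iota 0 w) -(size_map (fun t => (b * w + t) %% m)).
  apply: uniq_leq_size; first exact: window_uniq.
  move=> a a_in; rewrite mem_filter; apply/andP; split=> //.
  rewrite mem_iota add0n /=.
  by case/mapP: a_in => t; rewrite mem_iota => ltt ->; apply: ltn_pmod; lia.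
by have := count_predC (mem (window b)) (iota 0 m); rewrite size_iota; lia.
Qed.

(* Position [a] lies in window [b] iff [a = (b w + t) mod m] for some [t < w];
   then [b = (p m + a) / w] with [p = (b w + t) / m < q], so [b] is determined
   by some [p < q]. *)
Lemma count_windows_containing (c q a : nat) :
  c * w <= m * q -> count (fun b => a \in window b) (iota 0 c) <= q.
Proof.
move=> le_cw_mq; rewrite -size_filter -(size_iota 0 q).
rewrite -(size_map (fun p => (p * m + a) %/ w) (iota 0 q)).
apply: uniq_leq_size; first exact: filter_uniq (iota_uniq 0 c).
move=> b; rewrite mem_filter mem_iota add0n => /andP [/mapP [t]].
rewrite mem_iota add0n => ltt -> ltbc.
apply/mapP; exists ((b * w + t) %/ m).
  have := divn_eq (b * w + t) m; rewrite mem_iota add0n; nia.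
have w_gt0 : 0 < w by lia.
by rewrite -divn_eq (divnMDl _ _ w_gt0) divn_small ?addn0.
Qed.

End CyclicWindows.

Section WindowGraph.
Variables n c w m : nat.

Definition window_edge (u v : nat) : bool :=
  [&& u < c, c <= v & (v - c) \in window w m u].

Definition window_graph : rel 'I_n := fun u v =>
  (u != v) && [|| (u < c) && (v < c), window_edge u v | window_edge v u].

Definition window_clique : {set 'I_n} := [set v : 'I_n | v < c].

Lemma window_graph_simple : simple_graph window_graph.
Proof.
split=> [u | u v]; first by rewrite /window_graph eqxx.
by rewrite /window_graph eq_sym [(v < c) && _]andbC [window_edge v u || _]orbC.
Qed.

Lemma window_graph_split : split_graph window_graph.
Proof.
exists window_clique; split=> u v; rewrite !inE.
  by move=> ltuc ltvc neq_uv; rewrite /window_graph neq_uv ltuc ltvc.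
move=> /negbTE geuc /negbTE gevc.
by rewrite /window_graph /window_edge geuc gevc /= andbF.
Qed.

Lemma card_window_clique : #|window_clique| <= c.
Proof.
rewrite -(size_iota 0 c); apply: (card_le_size_inj (f := val)).
  by move=> u v _ _; exact: val_inj.
by move=> v; rewrite inE mem_iota.
Qed.

Lemma card_window_stable : n <= c + m -> #|~: window_clique| <= m.
Proof.
move=> le_n; rewrite -(size_iota 0 m).
apply: (card_le_size_inj (f := fun v : 'I_n => v - c)).
  move=> u v; rewrite !inE -!leqNgt => le_cu le_cv /= eq_uv.
  by apply: ord_inj; lia.
by move=> v; rewrite !inE -leqNgt mem_iota => le_cv; have := ltn_ord v; lia.
Qed.

Lemma window_graph_stableE (v u : 'I_n) : c <= v ->
  window_graph v u = (u < c) && (v - c \in window w m u).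
Proof.
move=> le_cv; rewrite /window_graph /window_edge ltnNge le_cv /=.
case: (ltnP u c) => [ltuc | //]; case: eqVneq => // eq_vu.
by move: ltuc; rewrite -eq_vu ltnNge le_cv.
Qed.

Lemma window_graph_cliqueE (v u : 'I_n) : v < c ->
  compl_graph window_graph v u = (c <= u) && (u - c \notin window w m v).
Proof.
move=> ltvc; rewrite /compl_graph /window_graph /window_edge ltvc /=.
case: (ltnP u c) => [ltuc | le_cu] /=; first by rewrite andbT andbN.
have -> : v != u by apply/eqP => eq_vu; move: ltvc; rewrite eq_vu ltnNge le_cu.
by rewrite orbF.
Qed.

Lemma window_graph_degree (q : nat) (v : 'I_n) :
  c * w <= m * q -> v \notin window_clique ->
  #|[set u | window_graph v u]| <= q.
Proof.
move=> le_cw_mq; rewrite inE -leqNgt => le_cv.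
apply: leq_trans (count_windows_containing (v - c) le_cw_mq).
rewrite -size_filter; apply: (card_le_size_inj (f := val)).
  by move=> x y _ _; exact: val_inj.
move=> u; rewrite inE window_graph_stableE // => /andP [ltuc v_in_u].
by rewrite mem_filter v_in_u mem_iota.
Qed.

Lemma window_graph_codegree (v : 'I_n) :
  w <= m -> n <= c + m -> v \in window_clique ->
  #|[set u | compl_graph window_graph v u]| <= m - w.
Proof.
move=> le_wm le_n; rewrite inE => ltvc.
apply: leq_trans (count_notin_window v le_wm).
rewrite -size_filter; apply: (card_le_size_inj (f := fun u : 'I_n => u - c)).
  move=> x y; rewrite !inE !window_graph_cliqueE //.
  move=> /andP [le_cx _] /andP [le_cy _] eq_xy.
  by apply: ord_inj; lia.
move=> u; rewrite inE window_graph_cliqueE // => /andP [le_cu u_notin_v].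
rewrite mem_filter /= u_notin_v mem_iota.
by have := ltn_ord u; lia.
Qed.

End WindowGraph.

Lemma split_ramsey_lower (k i j n : nat) :
  k.+1 < i -> k.+1 < j -> (i - 1) * k.+1 <= (j - 1) * (i - k.+2) ->
  n < i + j - 1 -> ~ ramsey_SP_prop k i j n.
Proof.
move=> lt_ki lt_kj le_windows lt_n P.
pose g : rel 'I_n := window_graph (i - 1) k.+1 (j - 1).
have le_n : n <= (i - 1) + (j - 1) by lia.
have cover x y : x != y -> g x y || compl_graph g x y.
  by rewrite /compl_graph => ->; case: (g x y).
have cover_compl x y : x != y -> compl_graph g x y || g x y.
  by move=> /(cover x y); rewrite orbC.
have [[S [cardS denseS]] | [S [cardS sparseS]]] :=
  P g (window_graph_simple _ _ _ _) (window_graph_split _ _ _ _).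
- apply: (no_sparse_set_of_small_codegree (K := window_clique n (i - 1))
           cover _ _ cardS denseS).
    by have := card_window_clique n (i - 1); lia.
  move=> x /(window_graph_degree le_windows) le_deg.
  by apply: leq_ltn_trans (leq_add le_deg (leqnn k.+1)) _; lia.
- apply: (no_sparse_set_of_small_codegree (K := ~: window_clique n (i - 1))
           cover_compl _ _ cardS sparseS).
    by have := card_window_stable le_n; lia.
  move=> x; rewrite inE negbK => x_clique.
  have le_wm : k.+1 <= j - 1 by lia.
  have le_codeg := window_graph_codegree le_wm le_n x_clique.
  by apply: leq_ltn_trans (leq_add le_codeg (leqnn k.+1)) _; lia.
Qed.

Lemma split_ramsey_hyp_cases (i j k : nat) :
  0 < i -> 0 < j ->
  ((k%:Z + 1) ^+ 2 <= (i%:Z - k%:Z - 2) * (j%:Z - k%:Z - 2))%R ->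
  i = 1 /\ j = 1 \/
  [/\ k.+1 < i, k.+1 < j & (i - 1) * k.+1 <= (j - 1) * (i - k.+2)].
Proof.
rewrite expr2 => i_gt0 j_gt0 hyp.
case: (ltnP k.+1 i) => [lt_ki | le_ik]; case: (ltnP k.+1 j) => [lt_kj | le_jk].
- by right; split=> //; nia.
- nia.
- nia.
- by left; nia.
Qed.

Theorem theorem6p2 (i j k : nat) :
  0 < i -> 0 < j ->
  ((k%:Z + 1) ^+ 2 <= (i%:Z - k%:Z - 2) * (j%:Z - k%:Z - 2))%R ->
  is_ramsey_SP k i j (i + j - 1).
Proof.
move=> i_gt0 j_gt0 hyp; split; first exact: split_ramsey_upper.
move=> n P; rewrite leqNgt; apply/negP => lt_n.
have [[eq_i1 eq_j1] | [lt_ki lt_kj le_windows]] :=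
  split_ramsey_hyp_cases i_gt0 j_gt0 hyp.
- move: lt_n P; rewrite eq_i1 eq_j1 ltnS leqn0 => /eqP ->.
  exact: ramsey_SP_prop0.
- exact: split_ramsey_lower lt_ki lt_kj le_windows lt_n P.
Qed.
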